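(* Let $X=(x_{i,j})$ and $Y=(y_{i,j})$ be arbitrary elements of $FT_n(M)$. (i) $v_M(X)=+\infty$ if and only if $X$ is diagonal. (ii) $\tilde v_M(X)\ge v_M(X)$. (iii) For any $i,j\in\mathbb F_p$, $v_M(iX+jY)\ge\min(v_M(X),v_M(Y))$ and $\tilde v_M(iX+jY)\ge\min(\tilde v_M(X),\tilde v_M(Y))$; in particular adding integer multiples of $I$ does not change $v_M$ or $\tilde v_M$. (iv) $v_M(X^{(p)})=p\,v_M(X)$ and $\tilde v_M(X^{(p)})=p\,\tilde v_M(X)$. (v) $v_M(XY)\ge\min(v_M(X),v_M(Y))$ and $\tilde v_M(XY)\ge\min(\tilde v_M(X),\tilde v_M(Y))$. (vi) If $X$ is nilpotent (i.e. not invertible), then $v_M(XY)\ge\min(v_M(X),\tilde v_M(Y))$ and $v_M(YX)\ge\min(v_M(X),\tilde v_M(Y))$. (vii) If $X$ and $Y$ are both nilpotent, then $v_M(XY)\ge\min(\tilde v_M(X),\tilde v_M(Y))$. (viii) If $X$ is invertible and $v_M(X)>v_M(Y)$, then $v_M(XY)=v_M(YX)=v_M(Y)$. (ix) If $X$ is invertible and $\tilde v_M(X)>\tilde v_M(Y)$, then $\tilde v_M(XY)=\tilde v_M(YX)=\tilde v_M(Y)$. (x) If $X$ is invertible, then $v_M(X^{-1})=v_M(X)$ and $\tilde v_M(X^{-1})=\tilde v_M(X)$. (xi) Let $c$ be an integer, suppose $X$ is nilpotent, and let $\gamma\in M$ with $v_M(\gamma)=c$. Then $v_M(\gamma X)\ge\min\big(\tfrac{c}{n-1},c\big)+v_M(X)$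 and (when $n\ge3$) $\tilde v_M(\gamma X)\ge\min\big(\tfrac{c}{n-2},c\big)+\tilde v_M(X)$.
   Context: Let $p$ be a prime and $M$ a discrete valuation field of characteristic $p$ with valuation $v_M$ (and $v_M(0)=+\infty$). Let $n\ge2$. $NT_n(M)$ denotes the strictly upper triangular $n\times n$ matrices over $M$, and $FT_n(M)=\{cI+X: c\in\mathbb F_p,\ X\in NT_n(M)\}$, a subring of $M_n(M)$ consisting of upper triangular matrices whose diagonal entries are all equal to one element of $\mathbb F_p$. For $X=(x_{i,j})\in FT_n(M)$ define $v_M(X)=\min_{1\le i<j\le n}\frac{v_M(x_{i,j})}{j-i}$ and $\tilde v_M(X)=\min_{1\le i<j\le n,\ (i,j)\ne(1,n)}\frac{v_M(x_{i,j})}{j-i}$ (values in $\mathbb Q\cup\{+\infty\}$). $X^{(p)}$ denotes the matrix obtained by raising every entry of $X$ to the $p$-th power. *)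

From HB Require Import structures.
From mathcomp Require Import all_boot all_order all_algebra.
From mathcomp Require Import constructive_ereal.
Set Implicit Arguments. Unset Strict Implicit. Unset Printing Implicit Defensive.
Import Order.TTheory GRing.Theory Num.Theory.
Local Open Scope ring_scope.
Local Open Scope ereal_scope.

Definition discrete_valuation (M : fieldType) (v : M -> \bar rat) : Prop :=
  [/\ (forall x, v x = +oo <-> x = 0%R),
      (forall x, x != 0%R -> exists k : int, v x = (k%:~R)%:E),
      (forall k : int, exists x, v x = (k%:~R)%:E),
      (forall x y, v (x * y)%R = v x + v y) &
      (forall x y, Order.min (v x) (v y) <= v (x + y)%R)].

(* FT_n(M): upper triangular matrices whose diagonal entries all equal one
   element of F_p (the image of a natural number c in M, char M = p). *)
Definition is_FT (M : fieldType) (n : nat) (X : 'M[M]_n) : Prop :=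
  (forall i j : 'I_n, (j < i)%N -> X i j = 0%R) /\
  exists c : nat, forall i : 'I_n, X i i = c%:R.

Definition ediv (x : \bar rat) (k : nat) : \bar rat := x * ((k%:R : rat)^-1)%:E.

Definition vmx (M : fieldType) (v : M -> \bar rat) (n : nat) (X : 'M[M]_n)
  : \bar rat :=
  \big[Order.min/+oo]_(i < n) \big[Order.min/+oo]_(j < n | (i < j)%N)
     ediv (v (X i j)) (j - i).

(* tilde v_M(X) = min over i<j, (i,j) <> (1,n) (0-based: (0, n-1)) *)
Definition vtmx (M : fieldType) (v : M -> \bar rat) (n : nat) (X : 'M[M]_n)
  : \bar rat :=
  \big[Order.min/+oo]_(i < n)
     \big[Order.min/+oo]_(j < n | (i < j)%N && ~~ ((val i == 0%N) && (val j == n.-1)))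
     ediv (v (X i j)) (j - i).

Definition frobmx (M : fieldType) (p n : nat) (X : 'M[M]_n) : 'M[M]_n :=
  map_mx (fun x => x ^+ p)%R X.

Definition mx_nilpotent (M : fieldType) (n : nat) (X : 'M[M]_n) : Prop :=
  exists k : nat, iter k (mulmx X) 1%:M = 0%R.

Definition is_diag (M : fieldType) (n : nat) (X : 'M[M]_n) : Prop :=
  forall i j : 'I_n, i != j -> X i j = 0%R.

From HB Require Import structures.
From mathcomp Require Import all_boot all_order all_algebra.
From mathcomp Require Import constructive_ereal zify lra.
Import Order.TTheory GRing.Theory Num.Theory.
Set Implicit Arguments. Unset Strict Implicit. Unset Printing Implicit Defensive.
Local Open Scope ring_scope.

(* For a set Q of positions (i, j) with i < j, let v_Q(X) be the minimum of
   v(x_ij) / (j - i) over Q; v_M and ~v_M are v_Q for all positions and for all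
   positions but the corner (1, n).  Both sets are closed under passing from
   [i, j] to the subintervals [i, k] and [k, j], so for upper triangular
   matrices whose diagonal entries have valuation >= 0 the condition
   "v(x_ij) >= m (j - i) on Q" is preserved by sums and products, because
   v(x_ik y_kj) >= m (k - i) + m (j - k).  An invertible X in FT_n has a
   diagonal d in F_p^*, so v(d) = 0 (as d^(p-1) = 1), and
   X^-1 = d^-1 (1 + A + ... + A^(n-1)) with A = 1 - d^-1 X strictly upper
   triangular; hence the condition passes to X^-1, giving (x), and (viii),
   (ix) follow from Y = X^-1 (X Y).  A nilpotent element of FT_n has zero
   diagonal, which kills exactly the products that would involve the corner
   entry of the other factor, giving (vi) and (vii). *)

Section Valuation.
Variables (M : fieldType) (v : M -> \bar rat).
Hypothesis dv : discrete_valuation v.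
Local Open Scope ereal_scope.

Lemma val_eq_pinfty x : v x = +oo <-> x = 0%R.
Proof. by case: dv. Qed.

Lemma val0 : v 0%R = +oo.
Proof. exact/val_eq_pinfty. Qed.

Lemma val_fin x : x != 0%R -> exists r : rat, v x = r%:E.
Proof. by case: dv => _ h _ _ _ /h [k ->]; exists k%:~R. Qed.

Lemma valM x y : v (x * y)%R = v x + v y.
Proof. by case: dv. Qed.

Lemma val_ge_add a x y : a <= v x -> a <= v y -> a <= v (x + y)%R.
Proof.
by case: dv => _ _ _ _ h ax ay; apply: le_trans (h x y); rewrite le_min ax ay.
Qed.

Lemma val_ge_sum (I : Type) (r : seq I) (P : pred I) (F : I -> M) a :
  (forall i, P i -> a <= v (F i)) -> a <= v (\sum_(i <- r | P i) F i)%R.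
Proof.
by move=> aF; elim/big_ind: _ => //; [rewrite val0 leey | exact: val_ge_add].
Qed.

Lemma val1 : v 1%R = 0.
Proof.
have [r vr] := val_fin (oner_neq0 M).
have := valM 1 1; rewrite mulr1 vr -EFinD => -[r2r].
by congr _%:E; apply: (addrI r); rewrite addr0.
Qed.

Lemma valX x k : v (x ^+ k)%R = v x *+ k.
Proof. by elim: k => [|k IH]; rewrite ?expr0 ?val1 // exprS valM IH muleS. Qed.

Lemma val_root_unity x k : (0 < k)%N -> (x ^+ k = 1)%R -> v x = 0.
Proof.
move=> k_gt0 xk; have x_neq0 : x != 0%R.
  apply: contraPneq xk => ->; rewrite expr0n gtn_eqF //.
  by apply/eqP; rewrite eq_sym oner_neq0.
have [r vr] := val_fin x_neq0; move: (valX x k); rewrite xk val1 vr -EFin_natmul.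
by case=> /eqP; rewrite eq_sym mulrn_eq0 gtn_eqF //= => /eqP->.
Qed.

Lemma valN x : v (- x)%R = v x.
Proof. by rewrite -mulN1r valM (@val_root_unity _ 2) ?sqrrN ?expr1n ?add0e. Qed.

Lemma val_eq0_neq0 x : v x = 0 -> x != 0%R.
Proof. by apply: contraPneq => ->; rewrite val0. Qed.

Lemma valV x : v x = 0 -> v x^-1%R = 0.
Proof.
by move=> vx; have := valM x x^-1; rewrite mulfV ?val_eq0_neq0 // val1 vx add0e.
Qed.

Lemma val_nat_ge0 k : 0 <= v k%:R%R.
Proof.
elim: k => [|k IH]; first by rewrite val0 leey.
by rewrite -addn1 natrD; apply: val_ge_add; rewrite ?val1.
Qed.

Lemma val_natr_pchar p c : p \in [pchar M] -> (c%:R : M) != 0%R -> v c%:R%R = 0.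
Proof.
move=> charM c_neq0; have p_gt1 := prime_gt1 (pcharf_prime charM).
apply: (@val_root_unity _ p.-1); first by rewrite -subn1 subn_gt0.
apply: (mulIf c_neq0); rewrite mul1r -exprSr prednK; last exact: ltnW.
by rewrite -pFrobenius_autE pFrobenius_aut_nat.
Qed.

End Valuation.

Section UpperTriangular.
Variables (F : fieldType) (n : nat).
Implicit Types (X Y A : 'M[F]_n).

Definition upper_mx X := forall i j : 'I_n, (j < i)%N -> X i j = 0.

Lemma iter_mulmx X k : iter k (mulmx X) 1%:M = X ^+ k.
Proof. by elim: k => [|k IH]; rewrite ?idmxE //= IH exprS mulmxE. Qed.

Lemma upper_mx1 : upper_mx 1.
Proof. by move=> i j ji; rewrite -idmxE mxE -val_eqE gtn_eqF. Qed.

Lemma upper_mxD X Y : upper_mx X -> upper_mx Y -> upper_mx (X + Y).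
Proof. by move=> uX uY i j ji; rewrite mxE uX ?uY ?addr0. Qed.

Lemma upper_mxZ a X : upper_mx X -> upper_mx (a *: X).
Proof. by move=> uX i j ji; rewrite mxE uX ?mulr0. Qed.

Lemma upper_mx_sum (I : Type) (r : seq I) (P : pred I) (G : I -> 'M[F]_n) :
  (forall i, P i -> upper_mx (G i)) -> upper_mx (\sum_(i <- r | P i) G i).
Proof.
move=> uG; elim/big_ind: _ => //; last exact: upper_mxD.
by move=> i j _; rewrite mxE.
Qed.

Lemma upper_mxM X Y : upper_mx X -> upper_mx Y -> upper_mx (X *m Y).
Proof.
move=> uX uY i j ji; rewrite mxE big1 // => k _.
by case: (ltnP k i) => [ki|ik]; [rewrite uX ?mul0r | rewrite uY ?mulr0 //; lia].
Qed.

Lemma upper_mxX X k : upper_mx X -> upper_mx (X ^+ k).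
Proof.
move=> uX; elim: k => [|k IH]; first exact: upper_mx1.
by rewrite exprS -mulmxE; apply: upper_mxM.
Qed.

Lemma mulmx_upper_diag X Y i : upper_mx X -> upper_mx Y ->
  (X *m Y) i i = X i i * Y i i.
Proof.
move=> uX uY; rewrite mxE (bigD1 i) //= big1 ?addr0 // => k ki.
case: (ltngtP k i) => [/uX ->|/uY ->|/val_inj ik]; rewrite ?mul0r ?mulr0 //.
by rewrite ik eqxx in ki.
Qed.

Lemma expr_upper_diag X k i : upper_mx X -> (X ^+ k) i i = X i i ^+ k.
Proof.
move=> uX; elim: k => [|k IH]; first by rewrite !expr0 -idmxE mxE eqxx.
by rewrite exprS -mulmxE mulmx_upper_diag ?IH ?exprS //; apply: upper_mxX.
Qed.

Lemma det_upper X : upper_mx X -> \det X = \prod_i X i i.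
Proof.
move=> uX; rewrite -det_tr det_trig; first by apply: eq_bigr => i _; rewrite mxE.
by apply/forallP => i; apply/forallP => j; apply/implyP => ij; rewrite mxE uX.
Qed.

Lemma unitmx_upper X : upper_mx X -> reflect (forall i, X i i != 0) (X \in unitmx).
Proof.
by move=> uX; rewrite unitmxE unitfE det_upper //; apply: (iffP (prodf_neq0 _ _)); auto.
Qed.

Lemma strictly_upper_exprS A k : (forall i j : 'I_n, (j <= i)%N -> A i j = 0) ->
  forall i j : 'I_n, (j < i + k)%N -> (A ^+ k) i j = 0.
Proof.
move=> sA; elim: k => [|k IH] i j ji.
  by rewrite expr0 -idmxE mxE -val_eqE gtn_eqF //; rewrite addn0 in ji.
rewrite exprS -mulmxE mxE big1 // => l _.
by case: (leqP l i) => [li|il]; [rewrite sA ?mul0r | rewrite IH ?mulr0 //; lia].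
Qed.

Lemma strictly_upper_nilpotent A : (forall i j : 'I_n, (j <= i)%N -> A i j = 0) ->
  A ^+ n = 0.
Proof.
move=> sA; apply/matrixP => i j; rewrite mxE strictly_upper_exprS //.
by have := ltn_ord j; lia.
Qed.

Lemma strictly_upper_1_subZ X d : upper_mx X -> (forall i, X i i = d) -> d != 0 ->
  forall i j : 'I_n, (j <= i)%N -> (1 - d^-1 *: X) i j = 0.
Proof.
move=> uX dX d_neq0 i j; rewrite -idmxE !mxE.
case: (ltngtP j i) => // [ji|/val_inj ->] _; last by rewrite eqxx dX mulVf ?subrr.
by rewrite uX // -val_eqE gtn_eqF // mulr0 subrr.
Qed.

Lemma invmx_upper_const_diag X d : upper_mx X -> (forall i, X i i = d) -> d != 0 ->
  invmx X = d^-1 *: \sum_(k < n) (1 - d^-1 *: X) ^+ k.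
Proof.
move=> uX dX d_neq0; set A := 1 - d^-1 *: X.
have XA : X = d *: (1 - A) by rewrite /A opprB addrC subrK scalerA mulfV ?scale1r.
have XZ : X *m (d^-1 *: \sum_(k < n) A ^+ k) = 1%:M.
  rewrite XA -scalemxAl -scalemxAr scalerA mulfV // scale1r mulmxE idmxE.
  rewrite -opprB mulNr -subrX1 strictly_upper_nilpotent ?sub0r ?opprK //.
  exact: strictly_upper_1_subZ.
have [X_unit _] := mulmx1_unit XZ.
by rewrite -[RHS](mulKmx X_unit) XZ mulmx1.
Qed.

Lemma upper_invmx_const_diag X d : upper_mx X -> (forall i, X i i = d) -> d != 0 ->
  upper_mx (invmx X).
Proof.
move=> uX dX d_neq0; rewrite (invmx_upper_const_diag uX dX d_neq0).
apply/upper_mxZ/upper_mx_sum => k _; apply: upper_mxX => i j /ltnW.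
exact: strictly_upper_1_subZ.
Qed.

Lemma invmx_upper_diag X i : upper_mx X -> upper_mx (invmx X) -> X \in unitmx ->
  invmx X i i = (X i i)^-1.
Proof.
move=> uX uXV /(unitmx_upper uX) X_neq0; apply: (mulfI (X_neq0 i)).
rewrite -mulmx_upper_diag // mulmxV -?idmxE ?mxE ?eqxx ?mulfV //.
exact/(unitmx_upper uX).
Qed.

End UpperTriangular.

Lemma min_le_l d (T : orderType d) (x y : T) : (Order.min x y <= x)%O.
Proof. by rewrite ge_min lexx. Qed.

Lemma min_le_r d (T : orderType d) (x y : T) : (Order.min x y <= y)%O.
Proof. by rewrite ge_min lexx orbT. Qed.

Section ExtendedRatHelpers.
Local Open Scope ereal_scope.

Lemma lee_wMn2r (x y : \bar rat) k : x <= y -> x *+ k <= y *+ k.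
Proof. by move=> xy; rewrite -!mule_natr lee_wpmul2r // lee_fin ler0n. Qed.

(* [mulrnDl] and [mulrnDr] restated with [+%E], which is convertible to but
   not syntactically [+%R], so that they can be used for rewriting. *)
Lemma enatmulDl (x y : \bar rat) k : (x + y) *+ k = x *+ k + y *+ k.
Proof. exact: mulrnDl. Qed.

Lemma enatmulDr (x : \bar rat) k l : x *+ (k + l) = x *+ k + x *+ l.
Proof. exact: mulrnDr. Qed.

Lemma ediv_ge m x k : (0 < k)%N -> (m <= ediv x k) = (m *+ k <= x).
Proof.
move=> k_gt0; have k0 : (0 < (k%:R : rat))%R by rewrite ltr0n.
rewrite /ediv -mule_natr -(lee_pmul2r (x := k%:R%:E)) //.
by rewrite -muleA -EFinM mulVf ?mule1 // gt_eqF.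
Qed.

Lemma ediv_mulrn x k p : ediv (x *+ p) k = ediv x k *+ p.
Proof. by rewrite /ediv -!mule_natr muleAC. Qed.

Lemma mulrn_min (x y : \bar rat) k : Order.min x y *+ k = Order.min (x *+ k) (y *+ k).
Proof.
case: (leP x y) => xy; [rewrite !min_l | rewrite !min_r] => //.
  exact: lee_wMn2r.
exact/lee_wMn2r/ltW.
Qed.

End ExtendedRatHelpers.

Lemma mulrn_min_div_le (c : rat) (K k : nat) : (0 < k)%N -> (k <= K)%N ->
  Order.min (c / K%:R) c *+ k <= c.
Proof.
move=> k_gt0 kK; have K_neq0 : (K%:R != 0 :> rat) by rewrite pnatr_eq0; lia.
have k_ge0 : (0 <= k%:R :> rat) by [].
rewrite -[_ *+ k]mulr_natr; case: (lerP 0 c) => c0.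
- apply: le_trans (ler_wpM2r k_ge0 (min_le_l _ _)) _.
  rewrite -[X in _ <= X](divfK K_neq0) ler_wpM2l ?ler_nat //.
  by rewrite divr_ge0 ?ler0n.
- apply: le_trans (ler_wpM2r k_ge0 (min_le_r _ _)) _.
  have : (1 <= k%:R :> rat) by rewrite ler1n.
  nra.
Qed.

Definition off_corner n (i j : 'I_n) := ~~ ((val i == 0%N) && (val j == n.-1)).

Definition subinterval_closed n (Q : 'I_n -> 'I_n -> bool) :=
  forall i k j : 'I_n, (i <= k <= j)%N -> Q i j -> Q i k && Q k j.

Section OffCorner.
Variable n : nat.
Implicit Types i j k : 'I_n.

Lemma off_corner_l i k j : (k < j)%N -> off_corner i k.
Proof. by move=> kj; apply/nandP; right; apply/eqP => /= kn; have := ltn_ord j; lia. Qed.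

Lemma off_corner_r i k j : (i < k)%N -> off_corner k j.
Proof. by move=> ik; apply/nandP; left; apply/eqP => /= k0; lia. Qed.

Lemma subinterval_closed_off_corner : subinterval_closed (@off_corner n).
Proof.
move=> i k j /andP[ik kj] Qij; apply/andP; split.
  by move: kj; rewrite leq_eqVlt => /orP[/eqP/val_inj -> //|/off_corner_l ->].
by move: ik; rewrite leq_eqVlt => /orP[/eqP/val_inj <- //|/off_corner_r ->].
Qed.

Lemma off_corner_length i j : off_corner i j -> (j - i <= n.-2)%N.
Proof. rewrite /off_corner negb_and => /orP[] /eqP /= h; have := ltn_ord j; lia. Qed.

End OffCorner.

Section WeightedValuation.
Variables (M : fieldType) (v : M -> \bar rat).
Hypothesis dv : discrete_valuation v.
Variable n : nat.
Implicit Types (X Y : 'M[M]_n) (Q : 'I_n -> 'I_n -> bool).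
Local Open Scope ereal_scope.

Definition vmx_on Q X := \big[Order.min/+oo]_(i < n)
  \big[Order.min/+oo]_(j < n | (i < j)%N && Q i j) ediv (v (X i j)) (j - i).

(* Unlike [vmx_on], this also reads the diagonal, where it asks
   [0 <= v (X i i)]; the diagonal terms of a product are then handled like the
   others. *)
Definition slope_bounded Q m X :=
  forall i j : 'I_n, (i <= j)%N -> Q i j -> m *+ (j - i) <= v (X i j).

Definition diag_val_ge0 X := forall i, 0 <= v (X i i).

Lemma vmxE X : vmx v X = vmx_on (fun _ _ => true) X.
Proof. by apply: eq_bigr => i _; apply: eq_bigl => j; rewrite andbT. Qed.

Lemma vtmxE X : vtmx v X = vmx_on (@off_corner n) X.
Proof. by []. Qed.

Lemma vmx_on_geP Q m X : m <= vmx_on Q X <->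
  forall i j : 'I_n, (i < j)%N -> Q i j -> m *+ (j - i) <= v (X i j).
Proof.
split=> [/bigmin_geP [_ mX] i j ij Qij | mX].
  have /bigmin_geP [_ mXi] := mX i isT.
  by rewrite -ediv_ge ?subn_gt0 //; apply: mXi; rewrite ij.
apply/bigmin_geP; split=> [|i _]; first exact: leey.
apply/bigmin_geP; split=> [|j /andP[ij Qij]]; first exact: leey.
by rewrite ediv_ge ?subn_gt0 //; apply: mX.
Qed.

Lemma vmx_on_le_entry Q X (i j : 'I_n) :
  (i < j)%N -> Q i j -> vmx_on Q X *+ (j - i) <= v (X i j).
Proof. exact/(vmx_on_geP _ _ _).1. Qed.

Lemma vmx_on_eq_pinfty Q X :
  vmx_on Q X = +oo <-> forall i j : 'I_n, (i < j)%N -> Q i j -> X i j = 0%R.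
Proof.
have -> : (vmx_on Q X = +oo) <-> (+oo <= vmx_on Q X) by rewrite leye_eq; split=> /eqP.
rewrite vmx_on_geP; split=> X0 i j ij Qij; last by rewrite X0 ?(val0 dv) ?leey.
apply/(val_eq_pinfty dv); move: (X0 i j ij Qij).
have j_i : (0 < j - i)%N by rewrite subn_gt0.
by rewrite -(prednK j_i) enatmul_pinfty leye_eq => /eqP.
Qed.

Lemma vmx_on_eq_pinfty_diag X : upper_mx X ->
  vmx_on (fun _ _ => true) X = +oo <-> is_diag X.
Proof.
move=> uX; rewrite vmx_on_eq_pinfty; split=> [X0 i j|Xd i j ij _].
  by rewrite -val_eqE neq_ltn => /orP[/X0|/uX]; apply.
by apply: Xd; rewrite -val_eqE neq_ltn ij.
Qed.

Lemma le_vmx_on Q1 Q2 X : (forall i j, Q1 i j -> Q2 i j) -> vmx_on Q2 X <= vmx_on Q1 X.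
Proof. by move=> Q12; apply/vmx_on_geP => i j ij /Q12; apply: vmx_on_le_entry. Qed.

Lemma eq_vmx_on Q X Y : (forall i j : 'I_n, (i < j)%N -> X i j = Y i j) ->
  vmx_on Q X = vmx_on Q Y.
Proof.
by move=> XY; apply: eq_bigr => i _; apply: eq_bigr => j /andP[ij _]; rewrite XY.
Qed.

Lemma vmx_on_add_scalar Q X a : vmx_on Q (X + a%:M) = vmx_on Q X.
Proof. by apply: eq_vmx_on => i j ij; rewrite !mxE -val_eqE ltn_eqF // mulr0n addr0. Qed.

Lemma vmx_on_add Q X Y : Order.min (vmx_on Q X) (vmx_on Q Y) <= vmx_on Q (X + Y).
Proof.
apply/vmx_on_geP => i j ij Qij; rewrite mxE; apply: (val_ge_add dv).
  by apply: le_trans (vmx_on_le_entry X ij Qij); apply/lee_wMn2r/min_le_l.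
by apply: le_trans (vmx_on_le_entry Y ij Qij); apply/lee_wMn2r/min_le_r.
Qed.

Lemma vmx_on_scale Q a X : 0 <= v a -> vmx_on Q X <= vmx_on Q (a *: X).
Proof.
move=> a_ge0; apply/vmx_on_geP => i j ij Qij.
by rewrite mxE (valM dv) lee_paddl ?vmx_on_le_entry.
Qed.

Lemma vmx_on_frob Q p X : (0 < p)%N ->
  vmx_on Q (map_mx (fun x => x ^+ p)%R X) = vmx_on Q X *+ p.
Proof.
case: p => // p _.
have minM : {morph (fun x : \bar rat => x *+ p.+1) : x y /
  Order.min x y >-> Order.min x y}.
  by move=> x y; rewrite mulrn_min.
rewrite /vmx_on (big_morph _ minM (enatmul_pinfty _)); apply: eq_bigr => i _.
rewrite (big_morph _ minM (enatmul_pinfty _)); apply: eq_bigr => j _.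
by rewrite mxE (valX dv) ediv_mulrn.
Qed.

Lemma vmx_on_scale_ge Q (K : nat) gamma (c : rat) X :
  (forall i j : 'I_n, (i < j)%N -> Q i j -> (j - i <= K)%N) -> v gamma = c%:E ->
  (Order.min (c / K%:R) c)%:E + vmx_on Q X <= vmx_on Q (gamma *: X).
Proof.
move=> QK vg; apply/vmx_on_geP => i j ij Qij; rewrite mxE (valM dv) vg enatmulDl.
apply: leeD; last exact: vmx_on_le_entry.
by rewrite -EFin_natmul lee_fin mulrn_min_div_le ?subn_gt0 ?QK.
Qed.

Lemma slope_bounded_vmx_on Q m X : slope_bounded Q m X -> m <= vmx_on Q X.
Proof. by move=> mX; apply/vmx_on_geP => i j /ltnW; apply: mX. Qed.

Lemma vmx_on_slope_bounded Q m X :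
  diag_val_ge0 X -> m <= vmx_on Q X -> slope_bounded Q m X.
Proof.
move=> X0 /vmx_on_geP mX i j; rewrite leq_eqVlt.
case/orP=> [/eqP/val_inj-> _|]; last exact: mX.
by rewrite subnn mule0n.
Qed.

(* The vanishing alternatives let a factor with zero diagonal (a nilpotent
   element of FT_n) avoid the pattern condition on the other factor. *)
Lemma slope_bounded_mulmx Q Q1 Q2 m X Y : upper_mx X -> upper_mx Y ->
  slope_bounded Q1 m X -> slope_bounded Q2 m Y ->
  (forall i k j : 'I_n, (i <= k <= j)%N -> Q i j ->
     [|| Q1 i k && Q2 k j, X i k == 0%R | Y k j == 0%R]) ->
  slope_bounded Q m (X *m Y).
Proof.
move=> uX uY mX mY QQ i j ij Qij; rewrite mxE; apply: (val_ge_sum dv) => k _.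
have [ki|ik] := ltnP k i; first by rewrite uX // mul0r (val0 dv) leey.
have [jk|kj] := ltnP j k; first by rewrite uY // mulr0 (val0 dv) leey.
have ikj : (i <= k <= j)%N by rewrite ik kj.
case/or3P: (QQ i k j ikj Qij) => [/andP[Q1ik Q2kj]|/eqP->|/eqP->]; last first.
- by rewrite mulr0 (val0 dv) leey.
- by rewrite mul0r (val0 dv) leey.
rewrite (valM dv) (_ : (j - i = (k - i) + (j - k))%N); last by lia.
by rewrite enatmulDr leeD ?mX ?mY.
Qed.

Lemma slope_bounded1 Q m : slope_bounded Q m 1%R.
Proof.
move=> i j ij _; rewrite -idmxE mxE; case: eqP => [->|_]; last by rewrite (val0 dv) leey.
by rewrite subnn mule0n mulr1n (val1 dv).
Qed.

Lemma slope_bounded_scale Q m a X :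
  0 <= v a -> slope_bounded Q m X -> slope_bounded Q m (a *: X).
Proof. by move=> a_ge0 mX i j ij Qij; rewrite mxE (valM dv) lee_paddl ?mX. Qed.

Lemma slope_bounded_sum Q m (I : Type) (r : seq I) (P : pred I) (F : I -> 'M[M]_n) :
  (forall i, P i -> slope_bounded Q m (F i)) ->
  slope_bounded Q m (\sum_(i <- r | P i) F i).
Proof.
by move=> mF i j ij Qij; rewrite summxE; apply: (val_ge_sum dv) => k /mF; apply.
Qed.

Section SubintervalClosed.
Variable Q : 'I_n -> 'I_n -> bool.
Hypothesis QQ : subinterval_closed Q.

Lemma slope_bounded_mulmx_closed m X Y : upper_mx X -> upper_mx Y ->
  slope_bounded Q m X -> slope_bounded Q m Y -> slope_bounded Q m (X *m Y).
Proof.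
by move=> uX uY mX mY; apply: (slope_bounded_mulmx uX uY mX mY) => i k j ikj /(QQ ikj) ->.
Qed.

Lemma slope_bounded_expr m X k :
  upper_mx X -> slope_bounded Q m X -> slope_bounded Q m (X ^+ k).
Proof.
move=> uX mX; elim: k => [|k IH]; first by rewrite expr0; apply: slope_bounded1.
by rewrite exprS -mulmxE; apply: slope_bounded_mulmx_closed => //; apply: upper_mxX.
Qed.

Lemma slope_bounded_invmx m X d : upper_mx X -> (forall i, X i i = d) -> v d = 0 ->
  slope_bounded Q m X -> slope_bounded Q m (invmx X).
Proof.
move=> uX dX vd mX; have d_neq0 := val_eq0_neq0 dv vd.
have sA := strictly_upper_1_subZ uX dX d_neq0.
have mA : slope_bounded Q m (1 - d^-1 *: X).
  move=> i j ij Qij; have [ji|ji] := leqP j i; first by rewrite sA // (val0 dv) leey.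
  rewrite -idmxE !mxE -val_eqE ltn_eqF // sub0r (valN dv) (valM dv) (valV dv vd) add0e.
  exact: mX.
rewrite (invmx_upper_const_diag uX dX d_neq0).
apply: slope_bounded_scale; first by rewrite (valV dv vd).
by apply: slope_bounded_sum => k _; apply: slope_bounded_expr => // i j /ltnW; apply: sA.
Qed.

End SubintervalClosed.

Lemma diag0_val_ge0 X : (forall i, X i i = 0%R) -> diag_val_ge0 X.
Proof. by move=> X0 i; rewrite X0 (val0 dv) leey. Qed.

Lemma diag_val_ge0_mulmx X Y : upper_mx X -> upper_mx Y ->
  diag_val_ge0 X -> diag_val_ge0 Y -> diag_val_ge0 (X *m Y).
Proof. by move=> uX uY X0 Y0 i; rewrite mulmx_upper_diag // (valM dv) adde_ge0. Qed.

Lemma vmx_on_mulmx_ge Q Q1 Q2 X Y : upper_mx X -> upper_mx Y ->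
  diag_val_ge0 X -> diag_val_ge0 Y ->
  (forall i k j : 'I_n, (i <= k <= j)%N -> Q i j ->
     [|| Q1 i k && Q2 k j, X i k == 0%R | Y k j == 0%R]) ->
  Order.min (vmx_on Q1 X) (vmx_on Q2 Y) <= vmx_on Q (X *m Y).
Proof.
move=> uX uY X0 Y0 QQ; apply/slope_bounded_vmx_on/(slope_bounded_mulmx uX uY _ _ QQ).
  exact/vmx_on_slope_bounded/min_le_l.
exact/vmx_on_slope_bounded/min_le_r.
Qed.

Lemma vmx_on_mulmx Q X Y : subinterval_closed Q -> upper_mx X -> upper_mx Y ->
  diag_val_ge0 X -> diag_val_ge0 Y ->
  Order.min (vmx_on Q X) (vmx_on Q Y) <= vmx_on Q (X *m Y).
Proof. by move=> QQ *; apply: vmx_on_mulmx_ge => // i k j ikj /(QQ _ _ _ ikj) ->. Qed.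

Section ConstantUnitDiagonal.
Variables (Q : 'I_n -> 'I_n -> bool) (X : 'M[M]_n) (d : M).
Hypotheses (QQ : subinterval_closed Q) (uX : upper_mx X) (dX : forall i, X i i = d).
Hypothesis vd : v d = 0.

Let d_neq0 : d != 0%R := val_eq0_neq0 dv vd.

Let X_unit : X \in unitmx.
Proof. by apply/(unitmx_upper uX) => i; rewrite dX d_neq0. Qed.

Let uXV : upper_mx (invmx X).
Proof. exact: upper_invmx_const_diag uX dX d_neq0. Qed.

Let dXV i : invmx X i i = d^-1%R.
Proof. by rewrite invmx_upper_diag ?dX. Qed.

Let XV0 : diag_val_ge0 (invmx X).
Proof. by move=> i; rewrite dXV (valV dv vd). Qed.

Let X0 : diag_val_ge0 X.
Proof. by move=> i; rewrite dX vd. Qed.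

Lemma vmx_on_invmx : vmx_on Q (invmx X) = vmx_on Q X.
Proof.
have le_vmx_on_invmx Z e : upper_mx Z -> (forall i, Z i i = e) -> v e = 0 ->
    vmx_on Q Z <= vmx_on Q (invmx Z).
  move=> uZ dZ ve; apply/slope_bounded_vmx_on/(slope_bounded_invmx QQ uZ dZ ve).
  by apply: vmx_on_slope_bounded => [i|]; rewrite ?dZ ?ve.
apply/le_anti; rewrite (le_vmx_on_invmx _ d) // andbT.
by rewrite -{2}[X]invmxK (le_vmx_on_invmx _ d^-1%R) // (valV dv vd).
Qed.

(* [Y = X^-1 (X Y)] gives [v_Q(Y) >= min (v_Q(X), v_Q(X Y))], and the first term
   is too large to be the minimum. *)
Lemma vmx_on_mulmx_unit Y : upper_mx Y -> diag_val_ge0 Y -> vmx_on Q Y < vmx_on Q X ->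
  vmx_on Q (X *m Y) = vmx_on Q Y /\ vmx_on Q (Y *m X) = vmx_on Q Y.
Proof.
move=> uY Y0 YX.
have vY_le B :
    Order.min (vmx_on Q X) (vmx_on Q Y) <= vmx_on Q B -> vmx_on Q Y <= vmx_on Q B.
  by rewrite (min_r (ltW YX)).
have le_vY B :
    Order.min (vmx_on Q X) (vmx_on Q B) <= vmx_on Q Y -> vmx_on Q B <= vmx_on Q Y.
  by rewrite ge_min leNgt YX.
split; apply/le_anti/andP; split.
- apply: le_vY; rewrite -vmx_on_invmx -{2}(mulKmx X_unit Y).
  by apply: vmx_on_mulmx => //; [apply: upper_mxM | apply: diag_val_ge0_mulmx].
- by apply/vY_le/vmx_on_mulmx.
- apply: le_vY; rewrite -vmx_on_invmx minC -{2}(mulmxK X_unit Y).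
  by apply: vmx_on_mulmx => //; [apply: upper_mxM | apply: diag_val_ge0_mulmx].
- by apply: vY_le; rewrite minC; apply: vmx_on_mulmx.
Qed.

End ConstantUnitDiagonal.

Lemma vmx_on_mulmx_nil_l X Y : upper_mx X -> upper_mx Y ->
  (forall i, X i i = 0%R) -> diag_val_ge0 Y ->
  Order.min (vmx_on (fun _ _ => true) X) (vmx_on (@off_corner n) Y)
    <= vmx_on (fun _ _ => true) (X *m Y).
Proof.
move=> uX uY X0 Y0; apply: vmx_on_mulmx_ge => // [|i k j /andP[ik _] _].
  exact: diag0_val_ge0.
move: ik; rewrite leq_eqVlt => /orP[/eqP/val_inj <-|ik]; first by rewrite X0 eqxx orbT.
by rewrite (off_corner_r j ik).
Qed.

Lemma vmx_on_mulmx_nil_r X Y : upper_mx X -> upper_mx Y ->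
  (forall i, X i i = 0%R) -> diag_val_ge0 Y ->
  Order.min (vmx_on (fun _ _ => true) X) (vmx_on (@off_corner n) Y)
    <= vmx_on (fun _ _ => true) (Y *m X).
Proof.
move=> uX uY X0 Y0; rewrite minC; apply: vmx_on_mulmx_ge => // [|i k j /andP[_ kj] _].
  exact: diag0_val_ge0.
move: kj; rewrite leq_eqVlt => /orP[/eqP/val_inj ->|kj]; first by rewrite X0 eqxx !orbT.
by rewrite (off_corner_l i kj).
Qed.

Lemma vmx_on_mulmx_nil X Y : upper_mx X -> upper_mx Y ->
  (forall i, X i i = 0%R) -> (forall i, Y i i = 0%R) ->
  Order.min (vmx_on (@off_corner n) X) (vmx_on (@off_corner n) Y)
    <= vmx_on (fun _ _ => true) (X *m Y).
Proof.
move=> uX uY X0 Y0; apply: vmx_on_mulmx_ge => // [||i k j /andP[ik kj] _].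
- exact: diag0_val_ge0.
- exact: diag0_val_ge0.
move: ik; rewrite leq_eqVlt => /orP[/eqP/val_inj <-|ik]; first by rewrite X0 eqxx orbT.
move: kj; rewrite leq_eqVlt => /orP[/eqP/val_inj ->|kj]; first by rewrite Y0 eqxx !orbT.
by rewrite (off_corner_l i kj) (off_corner_r j ik).
Qed.

End WeightedValuation.

Section FT.
Variables (p : nat) (M : fieldType) (v : M -> \bar rat) (n : nat).
Hypotheses (charM : p \in [pchar M]) (dv : discrete_valuation v).
Variable X : 'M[M]_n.
Hypothesis FTX : is_FT X.

Lemma is_FT_upper : upper_mx X.
Proof. by case: FTX. Qed.

Lemma is_FT_diag_ge0 : diag_val_ge0 v X.
Proof. by case: FTX => _ [c dX] i; rewrite dX (val_nat_ge0 dv). Qed.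

Lemma is_FT_nilpotent_diag : mx_nilpotent X -> forall i, X i i = 0.
Proof.
case: FTX => uX [c dX] [k Xk] i.
have : (X ^+ k) i i = 0 by rewrite -iter_mulmx Xk mxE.
by rewrite expr_upper_diag // => /eqP; rewrite expf_eq0 => /andP[_ /eqP].
Qed.

Lemma is_FT_unitmx_diag : X \in unitmx -> exists2 d, forall i, X i i = d & v d = 0%E.
Proof.
case: FTX => uX [c dX] /(unitmx_upper uX) X_neq0.
have [c0|c_neq0] := eqVneq (c%:R : M) 0; last first.
  by exists c%:R => //; apply: val_natr_pchar charM c_neq0.
by exists 1 => [i|]; [move: (X_neq0 i); rewrite dX c0 eqxx | apply: val1].
Qed.

End FT.

Theorem lemma3 (p : nat) (M : fieldType) (v : M -> \bar rat) (n : nat)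
  (charM : p \in [pchar M]) (dv : discrete_valuation v) (n_ge2 : (2 <= n)%N)
  (X Y : 'M[M]_n) (FTX : is_FT X) (FTY : is_FT Y) :
  (* (i) *)
  (vmx v X = +oo%E <-> is_diag X) /\
  (* (ii) *)
  (vmx v X <= vtmx v X)%E /\
  (* (iii) *)
  (forall i j : nat,
     (Order.min (vmx v X) (vmx v Y) <= vmx v (i%:R *: X + j%:R *: Y))%E /\
     (Order.min (vtmx v X) (vtmx v Y) <= vtmx v (i%:R *: X + j%:R *: Y))%E) /\
  (forall k : int, vmx v (X + k%:~R%:M) = vmx v X /\
                   vtmx v (X + k%:~R%:M) = vtmx v X) /\
  (* (iv) *)
  (vmx v (frobmx p X) = ((p%:R : rat)%:E * vmx v X)%E /\
   vtmx v (frobmx p X) = ((p%:R : rat)%:E * vtmx v X)%E) /\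
  (* (v) *)
  ((Order.min (vmx v X) (vmx v Y) <= vmx v (X *m Y))%E /\
   (Order.min (vtmx v X) (vtmx v Y) <= vtmx v (X *m Y))%E) /\
  (* (vi) *)
  (mx_nilpotent X ->
     (Order.min (vmx v X) (vtmx v Y) <= vmx v (X *m Y))%E /\
     (Order.min (vmx v X) (vtmx v Y) <= vmx v (Y *m X))%E) /\
  (* (vii) *)
  (mx_nilpotent X -> mx_nilpotent Y ->
     (Order.min (vtmx v X) (vtmx v Y) <= vmx v (X *m Y))%E) /\
  (* (viii) *)
  (X \in unitmx -> (vmx v Y < vmx v X)%E ->
     vmx v (X *m Y) = vmx v Y /\ vmx v (Y *m X) = vmx v Y) /\
  (* (ix) *)
  (X \in unitmx -> (vtmx v Y < vtmx v X)%E ->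
     vtmx v (X *m Y) = vtmx v Y /\ vtmx v (Y *m X) = vtmx v Y) /\
  (* (x) *)
  (X \in unitmx -> vmx v (invmx X) = vmx v X /\ vtmx v (invmx X) = vtmx v X) /\
  (* (xi) *)
  (forall (c : int) (gamma : M), mx_nilpotent X -> v gamma = (c%:~R)%:E ->
     (((Order.min (c%:~R / (n.-1)%:R) (c%:~R : rat))%:E + vmx v X)
        <= vmx v (gamma *: X))%E /\
     ((3 <= n)%N ->
       (((Order.min (c%:~R / (n.-2)%:R) (c%:~R : rat))%:E + vtmx v X)
          <= vtmx v (gamma *: X))%E)).
Proof.
have [uX uY] := (is_FT_upper FTX, is_FT_upper FTY).
have [X0 Y0] := (is_FT_diag_ge0 dv FTX, is_FT_diag_ge0 dv FTY).
have closed_off_corner := @subinterval_closed_off_corner n.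
have closed_all : subinterval_closed (fun _ _ : 'I_n => true) by [].
have unit_diag := is_FT_unitmx_diag charM dv FTX.
rewrite !vmxE !vtmxE; split; first exact: vmx_on_eq_pinfty_diag.
split; first exact: le_vmx_on.
split.
  move=> i j; rewrite !vmxE !vtmxE; split; apply: le_trans _ (vmx_on_add dv _ _ _);
    by apply: le_min2; apply: (vmx_on_scale dv); apply: (val_nat_ge0 dv).
split; first by move=> k; rewrite !vmxE !vtmxE !vmx_on_add_scalar.
split; first by rewrite !mule_natl !vmx_on_frob // prime_gt0 // (pcharf_prime charM).
split; first by split; apply: vmx_on_mulmx.
split.
  by move/(is_FT_nilpotent_diag FTX) => X00; split;
    [apply: vmx_on_mulmx_nil_l | apply: vmx_on_mulmx_nil_r].
split.
  move/(is_FT_nilpotent_diag FTX) => X00 /(is_FT_nilpotent_diag FTY) Y00.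
  exact: vmx_on_mulmx_nil.
split; first by move=> /unit_diag [d dX vd]; apply: vmx_on_mulmx_unit.
split; first by move=> /unit_diag [d dX vd]; apply: vmx_on_mulmx_unit.
split; first by move=> /unit_diag [d dX vd]; split; apply: vmx_on_invmx.
move=> c gamma _ vg; rewrite !vmxE !vtmxE.
split=> [|_]; apply: (vmx_on_scale_ge dv) vg => i j ij.
  by move=> _; have := ltn_ord j; lia.
exact: off_corner_length.
Qed.
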